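(* For every nonempty graph $G$ and every integer $t\ge 1$, \[\hat r(tK_2,G)\ge (t-1)\Delta(G)+|E(G)|.\] Consequently, $\hat r_\infty(G)\ge \Delta(G)/|E(G)|$.
   Context: All graphs are finite and simple; a graph is nonempty if it has at least one edge. $\Delta(G)$ is the maximum degree, $tK_2$ is a matching with $t$ edges. For graphs $F,G,H$, $F\to(G,H)$ means every red--blue coloring of $E(F)$ contains a red copy of $G$ or a blue copy of $H$, and $\hat r(G,H)=\min\{|E(F)|:F\to(G,H)\}$. For a nonempty graph $G$, $\hat r_\infty(G)=\lim_{t\to\infty}\frac{\hat r(tK_2,G)}{t\,|E(G)|}$ (this limit exists). *)

From Stdlib Require Import Reals ClassicalEpsilon.
From Coquelicot Require Import Coquelicot.
From mathcomp Require Import all_boot.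

Set Implicit Arguments.
Unset Strict Implicit.
Unset Printing Implicit Defensive.

Definition simple_graph (V : finType) (e : rel V) : Prop :=
  symmetric e /\ irreflexive e.

Definition edge_set (V : finType) (e : rel V) : {set {set V}} :=
  [set [set p.1; p.2] | p in [pred p : V * V | e p.1 p.2]].

Definition nedges (V : finType) (e : rel V) : nat := #|edge_set e|.

Definition maxdeg (V : finType) (e : rel V) : nat :=
  \max_(v : V) #|[set u | e v u]|.

Definition nonempty_graph (V : finType) (e : rel V) : Prop :=
  exists u v, e u v.

(* The matching tK_2 on vertices 'I_t * bool: edges {(i,false),(i,true)}. *)
Definition matching_rel (t : nat) : rel ('I_t * bool) :=
  fun x y => (x.1 == y.1) && (x.2 != y.2).

(* A 2-colouring of the edges of a host graph on 'I_n: each edge {u,v},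
   seen as the set [set u; v], gets a colour (true = red, false = blue). *)
Definition coloring (n : nat) := {set 'I_n} -> bool.

(* A copy of G (subgraph, not necessarily induced) in host graph F all of whose
   edges have colour col. *)
Definition mono_copy (V : finType) (g : rel V) (n : nat) (F : rel 'I_n)
  (c : coloring n) (col : bool) : Prop :=
  exists f : V -> 'I_n, injective f /\
    forall u v, g u v -> F (f u) (f v) /\ c [set f u; f v] = col.

Definition arrows (n : nat) (F : rel 'I_n)
  (V1 : finType) (g1 : rel V1) (V2 : finType) (g2 : rel V2) : Prop :=
  forall c : coloring n, mono_copy g1 F c true \/ mono_copy g2 F c false.

(* m is the number of edges of some graph F with F -> (G,H). Any finite
   graph is isomorphic to one on 'I_n, so this ranges over all finite graphs. *)
Definition arrow_size (V1 : finType) (g1 : rel V1) (V2 : finType) (g2 : rel V2)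
  (m : nat) : Prop :=
  exists n (F : rel 'I_n), simple_graph F /\ arrows F g1 g2 /\ nedges F = m.

Definition is_size_ramsey (V1 : finType) (g1 : rel V1) (V2 : finType) (g2 : rel V2)
  (m : nat) : Prop :=
  arrow_size g1 g2 m /\ forall k, arrow_size g1 g2 k -> (m <= k)%N.

(* The size Ramsey number hat r(G,H) = min{|E(F)| : F -> (G,H)}
   (defaults to 0 if no such F exists, which never happens for the
   graphs considered). *)
Definition size_ramsey (V1 : finType) (g1 : rel V1) (V2 : finType) (g2 : rel V2)
  : nat :=
  match excluded_middle_informative (exists m, is_size_ramsey g1 g2 m) with
  | left h => proj1_sig (constructive_indefinite_description _ h)
  | right _ => 0
  end.

Definition r_infty (V : finType) (g : rel V) : Rbar :=
  Lim_seq (fun t => (INR (size_ramsey (@matching_rel t) g)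
                     / (INR t * INR (nedges g)))%R).

(* Lower bound: if F has fewer than (t-1)Δ(G) + |E(G)| edges, repeatedly delete
   a vertex of F of degree at least Δ(G).  Each deletion removes at least Δ(G)
   edges, so after at most t-1 deletions either fewer than |E(G)| edges survive
   or every surviving vertex has degree below Δ(G); in both cases the surviving
   edges contain no copy of G.  Colour red exactly the edges meeting the set S
   of deleted vertices: a red tK_2 would need t distinct vertices in S, and a
   blue G would live in the surviving edges.  Existence: t disjoint copies of G
   arrow (tK_2, G), so the minimum is attained.  Since Δ(G) <= |E(G)|, the bound
   is at least tΔ(G), which gives the limit. *)
From Stdlib Require Import Reals Classical ClassicalEpsilon Wf_nat.
From Coquelicot Require Import Coquelicot.
From mathcomp Require Import all_boot zify.

Set Implicit Arguments.
Unset Strict Implicit.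

Local Open Scope nat_scope.

Section Embeddings.

Variables (V W : finType) (g : rel V).

Definition embeds_in (X : {set {set W}}) : Prop :=
  exists f : V -> W, injective f /\ forall u v, g u v -> [set f u; f v] \in X.

Definition avoiding (X : {set {set W}}) (S : {set W}) : {set {set W}} :=
  [set s in X | [disjoint s & S]].

Lemma embeds_in_subset (X Y : {set {set W}}) :
  X \subset Y -> embeds_in X -> embeds_in Y.
Proof.
by move=> sXY [f [f_inj hf]]; exists f; split=> // u v /hf /(subsetP sXY).
Qed.

Lemma avoiding_sub (X : {set {set W}}) S : avoiding X S \subset X.
Proof. by apply/subsetP => s /setIdP []. Qed.

Lemma embeds_in_card (X : {set {set W}}) : embeds_in X -> nedges g <= #|X|.
Proof.
move=> [f [f_inj hf]]; rewrite /nedges -(card_imset _ (imset_inj f_inj)).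
apply/subset_leq_card/subsetP => _ /imsetP [_ /imsetP [p hp ->] ->].
by rewrite imsetU1 imset_set1; apply: hf.
Qed.

Lemma maxdeg_attained : nonempty_graph g -> exists w, maxdeg g = #|[set u | g w u]|.
Proof.
move=> [u _]; have V_gt0 : 0 < #|V| by apply/card_gt0P; exists u.
have [w hw] := eq_bigmax (fun v => #|[set u | g v u]|) V_gt0.
by exists w; rewrite /maxdeg hw.
Qed.

Lemma embeds_in_maxdeg (X : {set {set W}}) :
  irreflexive g -> nonempty_graph g -> embeds_in X ->
  exists x, maxdeg g <= #|X :&: [set s : {set W} | x \in s]|.
Proof.
move=> irr ne [f [f_inj hf]]; have [w ->] := maxdeg_attained ne.
exists (f w).
have edge_inj : {in [set u | g w u] &, injective (fun u => [set f w; f u])}.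
  move=> u u'; rewrite !inE => hu _ e.
  have : f u \in [set f w; f u'] by rewrite -e !inE eqxx orbT.
  by rewrite !inE => /orP [/eqP /f_inj eu | /eqP /f_inj //]; rewrite eu irr in hu.
rewrite -(card_in_imset edge_inj); apply/subset_leq_card/subsetP => s.
by case/imsetP=> u; rewrite !inE => hu ->; rewrite hf // !inE eqxx.
Qed.

Lemma blocking_set_exists (X : {set {set W}}) k :
  irreflexive g -> nonempty_graph g -> #|X| < k * maxdeg g + nedges g ->
  exists2 S : {set W}, #|S| <= k & ~ embeds_in (avoiding X S).
Proof.
move=> irr ne; elim: k X => [|k IH] X hX.
  exists set0; rewrite ?cards0 // => /embeds_in_card.
  by have := subset_leq_card (avoiding_sub X set0); lia.
have [/existsP [x hx] | low_deg] :=
  boolP [exists x, maxdeg g <= #|X :&: [set s : {set W} | x \in s]|].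
  have hX' : #|X :\: [set s : {set W} | x \in s]| < k * maxdeg g + nedges g.
    move: hX hx (cardsID [set s : {set W} | x \in s] X); rewrite mulSn.
    by set a := #|X :&: _|; set b := #|X :\: _|; set c := #|X|; lia.
  have [S cardS noS] := IH _ hX'; exists (x |: S).
    by rewrite cardsU1; case: (x \in S) => /=; lia.
  move/(embeds_in_subset _); apply: contra_not noS; apply.
  apply/subsetP => s /setIdP [sX dis].
  rewrite !inE sX (disjointWr (subsetUr _ _) dis) andbT.
  by rewrite (disjointFl dis) // setU11.
exists set0; rewrite ?cards0 // => /(embeds_in_subset (avoiding_sub X set0)) emb.
have [x] := embeds_in_maxdeg irr ne emb.
by move/negP: low_deg; apply: contra_not => hx; apply/existsP; exists x.
Qed.

End Embeddings.

Lemma in_edge_set (W : finType) (F : rel W) a b : F a b -> [set a; b] \in edge_set F.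
Proof. by move=> h; apply/imsetP; exists (a, b). Qed.

Lemma nedges_gt0 (V : finType) (g : rel V) : nonempty_graph g -> 0 < nedges g.
Proof. by move=> [u [v h]]; apply/card_gt0P; exists [set u; v]; apply: in_edge_set. Qed.

Lemma maxdeg_le_nedges (V : finType) (g : rel V) :
  irreflexive g -> nonempty_graph g -> maxdeg g <= nedges g.
Proof.
move=> irr ne.
have emb : embeds_in g (edge_set g).
  by exists id; split=> [|u v]; [apply: inj_id | apply: in_edge_set].
have [x /leq_trans] := embeds_in_maxdeg irr ne emb; apply.
exact/subset_leq_card/subsetIl.
Qed.

Section BlockingColoring.

Variables (n : nat) (F : rel 'I_n) (S : {set 'I_n}).

Definition meets_coloring : coloring n := fun s => ~~ [disjoint s & S].

Lemma red_matching_size t : mono_copy (@matching_rel t) F meets_coloring true -> t <= #|S|.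
Proof.
move=> [f [f_inj hf]].
(* the endpoint of the i-th matching edge that lies in S *)
pose h i := f (i, f (i, false) \notin S).
have hS i : h i \in S.
  rewrite /h; case: (boolP (f (i, false) \in S)) => //= out.
  have /hf [_ red] : matching_rel (i, false) (i, true) by rewrite /matching_rel /= eqxx.
  apply: contraLR red => fiS; rewrite /meets_coloring negbK disjoints_subset.
  by apply/subsetP => y; rewrite !inE => /orP [] /eqP ->.
have h_inj : injective h by move=> i j /f_inj [].
rewrite -[t]card_ord -cardsT -(card_imset _ h_inj).
by apply/subset_leq_card/subsetP => _ /imsetP [i _ ->].
Qed.

Lemma blue_copy_avoids (V : finType) (g : rel V) :
  mono_copy g F meets_coloring false -> embeds_in g (avoiding (edge_set F) S).
Proof.
move=> [f [f_inj hf]]; exists f; split=> // u v /hf [hF hc].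
by rewrite inE in_edge_set //=; apply/negbFE.
Qed.

End BlockingColoring.

Lemma arrow_size_matching_ge (V : finType) (g : rel V) t m :
  simple_graph g -> nonempty_graph g -> 1 <= t ->
  arrow_size (@matching_rel t) g m -> (t - 1) * maxdeg g + nedges g <= m.
Proof.
move=> sg ne t_gt0 [n [F [_ [arF <-]]]]; rewrite leqNgt; apply/negP => small.
have [S cardS noS] := blocking_set_exists sg.2 ne small.
case: (arF (meets_coloring S)) => [red | /blue_copy_avoids //].
by have := leq_trans (red_matching_size red) cardS; lia.
Qed.

Section DisjointCopies.

Variables (V : finType) (g : rel V) (t : nat).
Hypotheses (g_sym : symmetric g) (g_irr : irreflexive g).

Local Notation T := ('I_t * V)%type.

(* Host graphs live on ordinals, so the vertex set 'I_t * V of t disjoint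
   copies of g is transported along enum_val. *)
Definition disjoint_copies : rel 'I_#|{: T}| := fun x y =>
  ((enum_val x).1 == (enum_val y).1) && g (enum_val x).2 (enum_val y).2.

Lemma disjoint_copiesE i j a b :
  disjoint_copies (enum_rank (i, a)) (enum_rank (j, b)) = (i == j) && g a b.
Proof. by rewrite /disjoint_copies !enum_rankK. Qed.

Lemma disjoint_copies_simple : simple_graph disjoint_copies.
Proof.
split=> [x y | x]; rewrite /disjoint_copies; first by rewrite eq_sym g_sym.
by rewrite g_irr andbF.
Qed.

Lemma red_matching_of_red_edges (c : coloring #|{: T}|) (q : 'I_t -> V * V) :
  (forall i, g (q i).1 (q i).2 && c [set enum_rank (i, (q i).1); enum_rank (i, (q i).2)]) ->
  mono_copy (@matching_rel t) disjoint_copies c true.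
Proof.
move=> hq; pose f x := enum_rank (x.1, if x.2 then (q x.1).2 else (q x.1).1).
exists f; split.
  move=> [i b] [j b'] /enum_rank_inj [/= eij]; subst j.
  have /andP [gq _] := hq i.
  by case: b b' => [] [] // e; rewrite e g_irr in gq.
move=> [i b] [j b'] /andP [/eqP /= eij nb]; subst j.
have /andP [gq cq] := hq i; rewrite /f /= disjoint_copiesE eqxx.
case: b b' nb => [] [] nb; try by exfalso; move: nb; rewrite eqxx.
  by split; [rewrite g_sym | rewrite setUC].
by split; [exact: gq | exact: cq].
Qed.

Lemma disjoint_copies_arrows :
  nonempty_graph g -> arrows disjoint_copies (@matching_rel t) g.
Proof.
move=> [u0 _] c.
pose red_edge i (p : V * V) := g p.1 p.2 && c [set enum_rank (i, p.1); enum_rank (i, p.2)].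
have [all_red | ] := boolP [forall i, [exists p, red_edge i p]].
  left; pose q i := odflt (u0, u0) [pick p | red_edge i p].
  apply: (@red_matching_of_red_edges _ q).
  move=> i; rewrite /q; case: pickP => // none.
  by have /existsP [p] := forallP all_red i; rewrite none.
rewrite negb_forall => /existsP [i]; rewrite negb_exists => /forallP blue.
right; exists (fun a => enum_rank (i, a)); split=> [a b /enum_rank_inj [] // | u v guv].
rewrite disjoint_copiesE eqxx guv; split=> //.
by apply/negbTE; have := blue (u, v); rewrite /red_edge guv.
Qed.

End DisjointCopies.

Lemma arrow_size_matching_exists (V : finType) (g : rel V) t :
  simple_graph g -> nonempty_graph g -> exists m, arrow_size (@matching_rel t) g m.
Proof.
move=> [g_sym g_irr] ne; set F := @disjoint_copies _ g t.
exists (nedges F), _, F; split; first exact: disjoint_copies_simple.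
by split=> //; apply: disjoint_copies_arrows.
Qed.

Lemma size_ramsey_spec (V1 V2 : finType) (g1 : rel V1) (g2 : rel V2) :
  (exists m, arrow_size g1 g2 m) -> arrow_size g1 g2 (size_ramsey g1 g2).
Proof.
move=> ex_m; rewrite /size_ramsey; case: excluded_middle_informative => [h | []].
  by case: (constructive_indefinite_description _ h) => m [].
have [m [[hm least] _]] :=
  dec_inh_nat_subset_has_unique_least_element _ (fun n => classic _) ex_m.
by exists m; split=> // k /least /leP.
Qed.

Section RealBound.
Local Open Scope R_scope.

Lemma Rdiv_le_scaled (d e r k : R) :
  0 < k -> 0 < e -> k * d <= r -> d / e <= r / (k * e).
Proof.
move=> k_gt0 e_gt0 kd_le_r.
apply: Rle_trans (Rmult_le_compat_r _ _ _ _ kd_le_r); last first.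
  by left; apply/Rinv_0_lt_compat/Rmult_lt_0_compat.
by right; field; split; apply: Rgt_not_eq.
Qed.

End RealBound.

Theorem proposition3p2 (V : finType) (g : rel V) :
  simple_graph g -> nonempty_graph g ->
  (forall t : nat, (1 <= t)%N ->
     ((t - 1) * maxdeg g + nedges g <= size_ramsey (@matching_rel t) g)%N)
  /\ Rbar_le (Rbar.Finite (Rdiv (INR (maxdeg g)) (INR (nedges g)))) (r_infty g).
Proof.
move=> sg ne.
have lower t : 1 <= t -> (t - 1) * maxdeg g + nedges g <= size_ramsey (@matching_rel t) g.
  move=> t_gt0; apply: arrow_size_matching_ge => //.
  exact/size_ramsey_spec/arrow_size_matching_exists.
split=> //; rewrite /r_infty -(Lim_seq_const (INR (maxdeg g) / INR (nedges g))).
apply: Lim_seq_le_loc; exists 1 => t /leP t_gt0.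
apply: Rdiv_le_scaled; [exact/lt_0_INR/leP | exact/lt_0_INR/leP/nedges_gt0 |].
rewrite -mult_INR; apply/le_INR/leP.
have le_tD : maxdeg g <= t * maxdeg g by rewrite leq_pmull.
have := lower t t_gt0; rewrite mulnBl mul1n.
by have := maxdeg_le_nedges sg.2 ne; lia.
Qed.
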